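(* Consider a Why Query with the \texttt{SUM} aggregate, an attribute $X$ with filters $p_1,\dots,p_m$, a threshold $\varepsilon$, and a canonical predicate $P^C$. Then for every nonempty $P\subsetneq P^C$, $P$ is an actual cause and $\overline{P}=P^C\setminus P$ is a valid contingency for $P$, i.e. $\Delta(D-D_{\overline{P}}-D_P)\le\varepsilon<\Delta(D-D_{\overline{P}})$.
   Context: $D$ is a finite table of rows; $M$ is a numerical column; $s_1,s_2$ are disjoint sets of rows (sibling subspaces). $X$ is a categorical column with values $x_1,\dots,x_m$; filter $p_i$ is the condition $X=x_i$. A predicate is $P\subseteq\{p_1,\dots,p_m\}$, $D_P$ the set of rows whose $X$-value is in $P$; $D'-D''$ is set difference. For $D'\subseteq D$, $\Delta(D')=\sum_{t\in D'\cap s_1}t[M]-\sum_{t\in D'\cap s_2}t[M]$; $\Delta_i=\Delta(D_{p_i})$; $\Delta(D)>0$. $P$ is an actual cause if there is $\Gamma\subseteq\{p_1,\dots,p_m\}$ with $\Gamma\cap P=\emptyset$ (a valid contingency) such that $\Delta(D-D_\Gamma-D_P)\le\varepsilon<\Delta(D-D_\Gamma)$. Canonical predicate: order the filters so that $\Delta_1\ge\cdots\ge\Delta_m$ and let $j$ satisfy $\Delta(D)-\sum_{i=1}^{j}\Delta_i\le\varepsilon<\Delta(D)-\sum_{i=1}^{j-1}\Delta_i$; then $P^C=\{p_1,\dots,p_j\}$. *)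

From mathcomp Require Import all_boot all_order all_algebra.
Set Implicit Arguments. Unset Strict Implicit. Unset Printing Implicit Defensive.
Import Order.TTheory GRing.Theory Num.Theory.
Local Open Scope ring_scope.

Section WhyQuery.
Variables (R : realFieldType) (T : finType) (m : nat).
(* M : numerical column; s1 s2 : sibling subspaces;
   X : categorical column, with value x_i encoded as i : 'I_m,
   so that filter p_i is "X = x_i" and a predicate is a set of indices. *)
Variables (M : T -> R) (s1 s2 : {set T}) (X : T -> 'I_m).

Definition Delta (D' : {set T}) : R :=
  \sum_(t in D' :&: s1) M t - \sum_(t in D' :&: s2) M t.

Definition DP (D : {set T}) (P : {set 'I_m}) : {set T} :=
  [set t in D | X t \in P].

Definition Delta_i (D : {set T}) (i : 'I_m) : R := Delta (DP D [set i]).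

Definition valid_contingency (D : {set T}) (eps : R) (Gamma P : {set 'I_m}) :
  Prop :=
  [disjoint Gamma & P] /\
  Delta (D :\: DP D Gamma :\: DP D P) <= eps < Delta (D :\: DP D Gamma).

Definition actual_cause (D : {set T}) (eps : R) (P : {set 'I_m}) : Prop :=
  exists Gamma : {set 'I_m}, valid_contingency D eps Gamma P.

Definition sorted_filters (D : {set T}) : Prop :=
  forall i k : 'I_m, (i <= k)%N -> Delta_i D k <= Delta_i D i.

(* j defines the canonical predicate {p_1,...,p_j} (0-based: indices < j) *)
Definition canonical_index (D : {set T}) (eps : R) (j : nat) : Prop :=
  (j <= m)%N /\
  Delta D - \sum_(i < m | (i < j)%N) Delta_i D i <= eps <
  Delta D - \sum_(i < m | (i < j.-1)%N) Delta_i D i.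

Definition canonical_pred (j : nat) : {set 'I_m} := [set i : 'I_m | (i < j)%N].

End WhyQuery.

From Pilot Require Import Defs.
From mathcomp Require Import all_boot all_order all_algebra.
From mathcomp Require Import lra.
Set Implicit Arguments. Unset Strict Implicit. Unset Printing Implicit Defensive.
Import Order.TTheory GRing.Theory Num.Theory.
Local Open Scope ring_scope.

(** Because [Delta] is additive over disjoint sets of rows, removing the rows
   of a set of filters subtracts the sum of their [Delta_i].  Removing
   [D_P] after [D_(P^C - P)] removes exactly [D_(P^C)], which by the choice
   of [j] brings [Delta] down to at most [eps].  Before removing [D_P], only
   the filters of [P^C - P] have been subtracted; as [P] contains some [p_k]
   and [Delta_k >= Delta_(j-1) > 0] on [P^C] by sortedness, this is at most
   the sum over the first [j - 1] filters, which by the choice of [j] leaves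
   [Delta] above [eps]. *)

Lemma sumr_setD_le (R : numDomainType) (I : finType) (a : I -> R)
    (C P : {set I}) (k : I) :
  {in C, forall i, 0 <= a i} -> P \subset C -> k \in P ->
  \sum_(i in C :\: P) a i <= \sum_(i in C) a i - a k.
Proof.
move=> a_ge0 /subsetP sPC kP.
have kCP : k \in C :&: P by rewrite inE kP sPC.
have ak_le : a k <= \sum_(i in C :&: P) a i.
  rewrite (bigD1 k kCP) /= lerDl sumr_ge0 // => i /andP[/setIP[iC _] _].
  exact: a_ge0.
by rewrite [X in _ <= X - _](big_setID P) /= addrAC lerDr subr_ge0.
Qed.

Lemma sum_canonical_pred (R : nmodType) (m j : nat) (a : 'I_m -> R) :
  \sum_(i < m | (i < j)%N) a i = \sum_(i in canonical_pred m j) a i.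
Proof. by apply: eq_bigl => i; rewrite inE. Qed.

Lemma sum_ord_ltS (R : nmodType) (m : nat) (a : 'I_m -> R) (k : 'I_m) :
  \sum_(i < m | (i < k.+1)%N) a i = a k + \sum_(i < m | (i < k)%N) a i.
Proof.
rewrite (bigD1 k) //=; congr (_ + _); apply: eq_bigl => i.
by rewrite ltnS ltn_neqAle andbC.
Qed.

Section WhyQuerySum.
Variables (R : realFieldType) (T : finType) (m : nat).
Variables (M : T -> R) (s1 s2 : {set T}) (X : T -> 'I_m).

Local Notation Delta := (Delta M s1 s2).
Local Notation DP := (DP X).
Local Notation Delta_i := (Delta_i M s1 s2 X).

Lemma DP_subset (D : {set T}) (Q : {set 'I_m}) : DP D Q \subset D.
Proof. by apply/subsetP => t; rewrite inE => /andP[]. Qed.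

Lemma sum_setDI (D E S : {set T}) : E \subset D ->
  \sum_(t in (D :\: E) :&: S) M t =
  \sum_(t in D :&: S) M t - \sum_(t in E :&: S) M t.
Proof.
move=> /subsetP sED.
rewrite [in RHS](big_setID E) /= setIDAC.
have -> : D :&: S :&: E = E :&: S.
  by apply/setP => t; rewrite !inE; case tE: (t \in E); rewrite ?andbF //= sED ?andbT.
lra.
Qed.

Lemma Delta_setD (D E : {set T}) : E \subset D ->
  Delta (D :\: E) = Delta D - Delta E.
Proof. by move=> sED; rewrite /Defs.Delta !sum_setDI //; lra. Qed.

Lemma sum_DPI (D S : {set T}) (Q : {set 'I_m}) :
  \sum_(t in DP D Q :&: S) M t =
  \sum_(i in Q) \sum_(t in DP D [set i] :&: S) M t.
Proof.
rewrite (partition_big X [in Q]) => [|t]; last by rewrite !inE => /andP[/andP[]].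
apply: eq_bigr => i iQ; apply: eq_bigl => t; rewrite !inE.
by case: (eqVneq (X t) i) => [->|]; rewrite ?iQ ?andbT ?andbF //.
Qed.

Lemma Delta_DP (D : {set T}) (Q : {set 'I_m}) :
  Delta (DP D Q) = \sum_(i in Q) Delta_i D i.
Proof. by rewrite /Defs.Delta !sum_DPI -sumrB. Qed.

Lemma Delta_setD_DP (D : {set T}) (Q : {set 'I_m}) :
  Delta (D :\: DP D Q) = Delta D - \sum_(i in Q) Delta_i D i.
Proof. by rewrite Delta_setD ?DP_subset // Delta_DP. Qed.

Lemma setD_DP_setD (D : {set T}) (P Q : {set 'I_m}) : P \subset Q ->
  D :\: DP D (Q :\: P) :\: DP D P = D :\: DP D Q.
Proof.
move=> /subsetP sPQ; apply/setP => t; rewrite !inE.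
by case: (t \in D) => //=; case tP: (X t \in P) => //=; rewrite sPQ.
Qed.

(* For [j = 0] both sums are empty ([0.-1 = 0]), so [canonical_index] fails. *)
Lemma canonical_index_last (D : {set T}) (eps : R) (j : nat) :
  canonical_index M s1 s2 X D eps j ->
  exists2 k : 'I_m, j = k.+1 & 0 < Delta_i D k.
Proof.
case: j => [|k] [km /andP[le_eps lt_eps]].
  by have := le_lt_trans le_eps lt_eps; rewrite ltxx.
exists (Ordinal km) => //.
rewrite (sum_ord_ltS _ (Ordinal km)) in le_eps; lra.
Qed.

End WhyQuerySum.

Theorem theorem3p17 (R : realFieldType) (T : finType) (m : nat)
  (M : T -> R) (s1 s2 : {set T}) (X : T -> 'I_m)
  (D : {set T}) (eps : R) (j : nat) :
  [disjoint s1 & s2] ->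
  0 < Delta M s1 s2 D ->
  sorted_filters M s1 s2 X D ->
  canonical_index M s1 s2 X D eps j ->
  forall P : {set 'I_m},
    P != set0 -> P \proper canonical_pred m j ->
    actual_cause M s1 s2 X D eps P /\
    valid_contingency M s1 s2 X D eps (canonical_pred m j :\: P) P.
Proof.
move=> _ _ sorted cj P /set0Pn[p pP] /proper_sub sPC.
have [k def_j ak_gt0] := canonical_index_last cj.
case: cj => _ /andP[le_eps lt_eps]; subst j.
set a := Delta_i M s1 s2 X D in ak_gt0 le_eps lt_eps *.
set C := canonical_pred m k.+1 in sPC *.
have ak_le : {in C, forall i, a k <= a i}.
  by move=> i; rewrite inE ltnS; apply: sorted.
have a_ge0 : {in C, forall i, 0 <= a i}.
  by move=> i /ak_le; apply: le_trans; apply: ltW.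
suff valid : valid_contingency M s1 s2 X D eps (C :\: P) P.
  by split=> //; exists (C :\: P).
split; first by have /subsetDP[] := subxx (C :\: P).
rewrite setD_DP_setD // !Delta_setD_DP -sum_canonical_pred le_eps /=.
apply: (lt_le_trans lt_eps); rewrite lerD2l lerN2 /=.
apply: (le_trans (sumr_setD_le a_ge0 sPC pP)).
rewrite -sum_canonical_pred sum_ord_ltS addrAC gerDr subr_le0.
by rewrite ak_le // (subsetP sPC).
Qed.
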